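(* Let $n,m$ be positive integers and let $R_1,\dots,R_n:\{0,\dots,m\}\to\mathbb{R}$ be convex functions with $R_j(0)=0$. Then for every $k$ with $0\le k\le nm$ there exists an optimal $k$-profile $\mathbf{x}=(x_1,\dots,x_n)$ in which at most one index $j$ satisfies $0<x_j<m$.
   Context: A function $R:\{0,\dots,m\}\to\mathbb{R}$ is convex if $R(x+1)-R(x)$ is non-decreasing in $x$. A $k$-profile is a vector $\mathbf{x}=(x_1,\dots,x_n)$ with $x_j\in\{0,\dots,m\}$ and $\sum_j x_j=k$; it is optimal if its revenue $\sum_j R_j(x_j)$ is maximum among all $k$-profiles. *)

From mathcomp Require Import all_boot all_order all_algebra.
Set Implicit Arguments. Unset Strict Implicit. Unset Printing Implicit Defensive.
Import Order.TTheory GRing.Theory Num.Theory.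
Local Open Scope ring_scope.

Definition convex_fun (F : realFieldType) (m : nat) (R : 'I_m.+1 -> F) : Prop :=
  forall x : nat, (x.+2 <= m)%N ->
    R (inord x.+1) - R (inord x) <= R (inord x.+2) - R (inord x.+1).

Definition profile (n m k : nat) (x : 'I_n -> 'I_m.+1) : Prop :=
  (\sum_(j < n) (x j : nat))%N = k.

Definition revenue (F : realFieldType) (n m : nat)
  (R : 'I_n -> 'I_m.+1 -> F) (x : 'I_n -> 'I_m.+1) : F :=
  \sum_(j < n) R j (x j).

Definition optimal (F : realFieldType) (n m k : nat)
  (R : 'I_n -> 'I_m.+1 -> F) (x : 'I_n -> 'I_m.+1) : Prop :=
  profile k x /\
  forall y : 'I_n -> 'I_m.+1, profile k y -> revenue R y <= revenue R x.

(* Among the optimal k-profiles take one maximising sum_j x_j^2.  If two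
   coordinates x_i >= x_j were strictly between 0 and m, convexity of R_i and
   R_j would give
     rev(x + e_i - e_j) - rev(x) >= rev(x) - rev(x - e_i + e_j) >= 0,
   so x + e_i - e_j would again be optimal, with a larger sum of squares. *)

From mathcomp Require Import all_boot all_order all_algebra.
From mathcomp Require Import zify lra.
Set Implicit Arguments. Unset Strict Implicit. Unset Printing Implicit Defensive.
Import Order.TTheory GRing.Theory Num.Theory.
Local Open Scope ring_scope.

Lemma bigD2 (R : Type) (idx : R) (op : Monoid.com_law idx) (I : finType)
    (F : I -> R) (i j : I) :
  i != j ->
  \big[op/idx]_l F l = op (op (F i) (F j)) (\big[op/idx]_(l | (l != i) && (l != j)) F l).
Proof.
move=> ij; rewrite (bigD1 i) //= (bigD1 j) 1?eq_sym //=.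
by rewrite Monoid.mulmA.
Qed.

Lemma convex_fun_step (F : realFieldType) (m : nat) (R : 'I_m.+1 -> F) (a : 'I_m.+1) :
  convex_fun R -> (0 < a)%N -> (a < m)%N ->
  R a - R (inord a.-1) <= R (inord a.+1) - R a.
Proof.
move=> convR a_gt0 a_ltm; have := convR a.-1.
by rewrite prednK // inord_val; apply.
Qed.

Section Extensionality.

Variables (n m : nat) (x y : 'I_n -> 'I_m.+1).
Hypothesis exy : x =1 y.

Lemma profile_eq k : profile k x -> profile k y.
Proof. by rewrite /profile => <-; apply: eq_bigr => l _; rewrite exy. Qed.

Lemma revenue_eq (F : realFieldType) (R : 'I_n -> 'I_m.+1 -> F) :
  revenue R x = revenue R y.
Proof. by apply: eq_bigr => l _; rewrite exy. Qed.

End Extensionality.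

Definition sqnorm (n m : nat) (x : 'I_n -> 'I_m.+1) : nat :=
  (\sum_(j < n) (x j : nat) ^ 2)%N.

Lemma sqnorm_eq (n m : nat) (x y : 'I_n -> 'I_m.+1) : x =1 y -> sqnorm x = sqnorm y.
Proof. by move=> exy; apply: eq_bigr => l _; rewrite exy. Qed.

Lemma exists_profile (n m k : nat) : (k <= n * m)%N ->
  exists x : 'I_n -> 'I_m.+1, profile k x.
Proof.
move=> le_k_nm; exists (fun j => inord (minn m (k - j * m))).
have fill N : (\sum_(j < N) minn m (k - j * m) = minn k (N * m))%N.
  elim: N => [|N IH]; first by rewrite big_ord0 mul0n minn0.
  by rewrite big_ord_recr /= IH mulSn; lia.
rewrite /profile (eq_bigr (fun j : 'I_n => minn m (k - j * m))) ?fill; first lia.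
by move=> j _; rewrite inordK // ltnS geq_minl.
Qed.

Lemma exists_optimal_max_sqnorm (F : realFieldType) (n m k : nat)
    (R : 'I_n -> 'I_m.+1 -> F) :
  (exists x : 'I_n -> 'I_m.+1, profile k x) ->
  exists x, optimal k R x /\ forall y, optimal k R y -> (sqnorm y <= sqnorm x)%N.
Proof.
case=> x0 px0.
pose prof (f : {ffun 'I_n -> 'I_m.+1}) := (\sum_(j < n) (f j : nat) == k)%N.
pose opt f := prof f && [forall g, prof g ==> (revenue R g <= revenue R f)].
have ffE (y : 'I_n -> 'I_m.+1) : y =1 [ffun l => y l] by move=> l; rewrite ffunE.
have profP y : profile k y -> prof [ffun l => y l] by move=> /(profile_eq (ffE y))/eqP.
have optP f : opt f -> optimal k R f.
  case/andP=> /eqP pf /forallP maxf; split=> // y /profP py.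
  by rewrite (revenue_eq (ffE y)); exact: implyP (maxf _) py.
have [xo pxo maxo] := @arg_maxP _ _ _ [ffun l => x0 l] prof (revenue R) (profP _ px0).
have oxo : opt xo.
  by rewrite /opt pxo; apply/forallP => g; apply/implyP; exact: maxo.
have [x ox maxx] := arg_maxnP (fun f : {ffun _} => sqnorm f) oxo.
exists x; split; first exact: optP.
move=> y [py maxy]; rewrite (sqnorm_eq (ffE y)).
apply: maxx; rewrite /opt profP //; apply/forallP => g; apply/implyP => /eqP pg.
by rewrite -(revenue_eq (ffE y)); exact: maxy.
Qed.

(* x + e_i - e_j, meaningful only when x_i < m and 0 < x_j. *)
Definition move_unit (n m : nat) (x : 'I_n -> 'I_m.+1) (i j : 'I_n) : 'I_n -> 'I_m.+1 :=
  fun l => if l == i then inord (x i).+1 else if l == j then inord (x j).-1 else x l.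

Section MoveUnit.

Variables (n m : nat) (x : 'I_n -> 'I_m.+1) (i j : 'I_n).
Hypothesis ij : i != j.

Lemma move_unit_to : (x i < m)%N -> move_unit x i j i = (x i).+1 :> nat.
Proof. by move=> x_ltm; rewrite /move_unit eqxx inordK. Qed.

Lemma move_unit_from : move_unit x i j j = (x j).-1 :> nat.
Proof.
rewrite /move_unit eq_sym (negbTE ij) eqxx inordK //.
exact: leq_ltn_trans (leq_pred _) (ltn_ord _).
Qed.

Lemma big_move_unit (R : Type) (idx : R) (op : Monoid.com_law idx)
    (G : 'I_n -> 'I_m.+1 -> R) :
  \big[op/idx]_l G l (move_unit x i j l)
  = op (op (G i (move_unit x i j i)) (G j (move_unit x i j j)))
       (\big[op/idx]_(l | (l != i) && (l != j)) G l (x l)).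
Proof.
rewrite (bigD2 _ _ ij); congr (op _ _); apply: eq_bigr => l /andP[li lj].
by rewrite /move_unit (negbTE li) (negbTE lj).
Qed.

Lemma profile_move_unit k :
  (x i < m)%N -> (0 < x j)%N -> profile k x -> profile k (move_unit x i j).
Proof.
move=> xi_ltm xj_gt0; rewrite /profile (bigD2 _ _ ij) => <-.
rewrite (big_move_unit _ (fun _ a => nat_of_ord a)) move_unit_to // move_unit_from.
by rewrite /= addSnnS prednK.
Qed.

Lemma sqnorm_move_unit :
  (x j <= x i)%N -> (x i < m)%N -> (0 < x j)%N -> (sqnorm x < sqnorm (move_unit x i j))%N.
Proof.
move=> xji xi_ltm xj_gt0.
rewrite /sqnorm (big_move_unit _ (fun _ a => nat_of_ord a ^ 2)%N) (bigD2 _ _ ij).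
rewrite ltn_add2r move_unit_to // move_unit_from /=.
move: xji xj_gt0; case: (nat_of_ord (x j)) => // b; nia.
Qed.

End MoveUnit.

Section Exchange.

Variables (F : realFieldType) (n m : nat) (R : 'I_n -> 'I_m.+1 -> F).
Hypothesis convR : forall j, convex_fun (R j).
Variables (x : 'I_n -> 'I_m.+1) (i j : 'I_n).
Hypotheses (ij : i != j) (xi_gt0 : (0 < x i)%N) (xi_ltm : (x i < m)%N)
  (xj_gt0 : (0 < x j)%N) (xj_ltm : (x j < m)%N).

Lemma revenue_move_unit :
  revenue R x - revenue R (move_unit x j i) <= revenue R (move_unit x i j) - revenue R x.
Proof.
have ji : j != i by rewrite eq_sym.
have rest l : (l != j) && (l != i) = (l != i) && (l != j) by rewrite andbC.
rewrite /revenue (big_move_unit x ji _ R) (big_move_unit x ij _ R) (bigD2 _ _ ij) /=.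
rewrite (eq_bigl _ _ rest) /move_unit !eqxx (negbTE ij) (negbTE ji).
have := convex_fun_step (convR i) xi_gt0 xi_ltm.
have := convex_fun_step (convR j) xj_gt0 xj_ltm.
lra.
Qed.

Lemma optimal_move_unit k : optimal k R x -> optimal k R (move_unit x i j).
Proof.
case=> px maxx; split; first exact: profile_move_unit.
have ge_rev_x : revenue R (move_unit x j i) <= revenue R x.
  by apply/maxx/profile_move_unit; rewrite // eq_sym.
move=> y /maxx le_yx; apply: le_trans le_yx _.
by have := revenue_move_unit; lra.
Qed.

End Exchange.

Theorem lemma4 (F : realFieldType) (n m : nat) (hn : (0 < n)%N) (hm : (0 < m)%N)
  (R : 'I_n -> 'I_m.+1 -> F)
  (hconv : forall j, convex_fun (R j))
  (hzero : forall j, R j ord0 = 0)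
  (k : nat) (hk : (k <= n * m)%N) :
  exists x : 'I_n -> 'I_m.+1,
    optimal k R x /\
    (#|[pred j : 'I_n | (0 < x j)%N && (x j < m)%N]| <= 1)%N.
Proof.
have [x [xopt xmax]] := exists_optimal_max_sqnorm R (exists_profile hk).
exists x; split=> //; rewrite leqNgt; apply/card_gt1P => -[i [j []]].
rewrite !inE => /andP[xi_gt0 xi_ltm] /andP[xj_gt0 xj_ltm].
wlog xji : i j xi_gt0 xi_ltm xj_gt0 xj_ltm / (x j <= x i)%N.
  move=> H ij; have [le_ji|/ltnW le_ij] := leqP (x j) (x i); first exact: (H i j).
  by apply: (H j i); rewrite // eq_sym.
move=> ij; have := xmax _ (optimal_move_unit hconv ij xi_gt0 xi_ltm xj_gt0 xj_ltm xopt).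
by rewrite leqNgt sqnorm_move_unit.
Qed.
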